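(* For each $t\in\{0,1,\dots,T-1\}$, $k\in\mathbb{N}_0$ and $i\in\{1,\dots,N\}$, there exists an integer control limit $\delta_i^{(k,t)}$ with $0<\delta_i^{(k,t)}\le\xi_i$ such that, for every $x\in\mathbb{N}_0$, the action $a=1$ (replacement) is optimal in state $(x,k)$ at epoch $t$ if and only if $x\ge\delta_i^{(k,t)}$.
   Context: Fix integers $N\ge1$, $T\ge1$, reals $\alpha_0,\beta_0>0$, and for each $i\in\{1,\dots,N\}$ an integer failure threshold $\xi_i\ge1$ and costs $0<c_p^i<c_u^i$. $\mathbb{N}_0=\{0,1,2,\dots\}$. For real $r>0$ and $p\in(0,1)$, $NB(r,p)$ is the distribution on $\mathbb{N}_0$ with $P(n)=\frac{\Gamma(n+r)}{\Gamma(r)n!}p^r(1-p)^n$; $NB(0,p)$ is the point mass at $0$. For $t\in\{0,\dots,T\}$ let $p_t=\frac{\beta_0+Nt}{\beta_0+Nt+1}$. Let $\mathbb{I}_i(x)=1$ if $x\ge\xi_i$, else $0$; $\mathcal{A}_i(x)=\{0,1\}$ if $x<\xi_i$ and $\{1\}$ if $x\ge\xi_i$ ($a=1$: replacement, $a=0$: no action); $C_i(x,a)=a(1-\mathbb{I}_i(x))c_p^i+\mathbb{I}_i(x)c_u^i$. Define $\tilde V^{N,i}_T(x,k)=\mathbb{I}_i(x)c_u^i$ and for $t=T-1,\dots,0$: $\tilde V^{N,i}_t(x,k)=\min_{a\in\mathcal{A}_i(x)}\{C_i(x,a)+\mathbb{E}[\tilde V^{N,i}_{t+1}(x(1-a)+Z,\;k+Z+K)]\}$,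 where $Z\sim NB(\alpha_0+k,p_t)$ and $K\sim NB((N-1)(\alpha_0+k),p_t)$ are independent. An action $a\in\mathcal{A}_i(x)$ is optimal in state $(x,k)$ at epoch $t$ if it attains this minimum. *)

From Stdlib Require Import Reals Lra Lia.
From Coquelicot Require Import Coquelicot.
Open Scope R_scope.

(* rising factorial  r (r+1) ... (r+n-1) = Gamma(n+r)/Gamma(r) *)
Fixpoint rising (r : R) (n : nat) : R :=
  match n with
  | O => 1
  | S m => rising r m * (r + INR m)
  end.

(* Negative binomial pmf NB(r,p):
   P(n) = Gamma(n+r)/(Gamma(r) n!) p^r (1-p)^n, written via the rising
   factorial; for r = 0 this is the point mass at 0 (rising 0 n = 0 for n>=1,
   Rpower p 0 = 1). *)
Definition nb_pmf (r p : R) (n : nat) : R :=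
  rising r n / INR (Factorial.fact n) * Rpower p r * (1 - p) ^ n.

Definition p_t (beta0 : R) (N t : nat) : R :=
  (beta0 + INR N * INR t) / (beta0 + INR N * INR t + 1).

Definition Ind (xi : nat) (x : nat) : R := if (xi <=? x)%nat then 1 else 0.

Definition Cost (xi : nat) (cp cu : R) (x a : nat) : R :=
  INR a * (1 - Ind xi x) * cp + Ind xi x * cu.

(* E[ f(Z,K) ] with Z ~ NB(alpha0+k, p), K ~ NB((N-1)(alpha0+k), p) independent *)
Definition expect2 (N : nat) (alpha0 p : R) (k : nat) (f : nat -> nat -> R) : R :=
  Series (fun z => Series (fun m =>
    nb_pmf (alpha0 + INR k) p z *
    nb_pmf (INR (N - 1) * (alpha0 + INR k)) p m * f z m)).

(* W s = tilde V_{T-s}, by backward recursion on s = T - t. *)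
Fixpoint W (N T : nat) (alpha0 beta0 : R) (xi : nat) (cp cu : R)
    (s : nat) (x k : nat) : R :=
  match s with
  | O => Ind xi x * cu
  | S s' =>
      let t := (T - S s')%nat in
      let Q (a : nat) : R :=
        Cost xi cp cu x a +
        expect2 N alpha0 (p_t beta0 N t) k
          (fun z m => W N T alpha0 beta0 xi cp cu s'
                        (x * (1 - a) + z)%nat (k + z + m)%nat) in
      if (xi <=? x)%nat then Q 1%nat else Rmin (Q 0%nat) (Q 1%nat)
  end.

Definition Vt (N T : nat) (alpha0 beta0 : R) (xi : nat) (cp cu : R)
    (t x k : nat) : R :=
  W N T alpha0 beta0 xi cp cu (T - t) x k.

Definition Qval (N T : nat) (alpha0 beta0 : R) (xi : nat) (cp cu : R)
    (t x k a : nat) : R :=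
  Cost xi cp cu x a +
  expect2 N alpha0 (p_t beta0 N t) k
    (fun z m => Vt N T alpha0 beta0 xi cp cu (S t)
                  (x * (1 - a) + z)%nat (k + z + m)%nat).

Definition admissible (xi x a : nat) : Prop :=
  if (xi <=? x)%nat then a = 1%nat else (a = 0%nat \/ a = 1%nat).

Definition optimal (N T : nat) (alpha0 beta0 : R) (xi : nat) (cp cu : R)
    (t x k a : nat) : Prop :=
  admissible xi x a /\
  Qval N T alpha0 beta0 xi cp cu t x k a = Vt N T alpha0 beta0 xi cp cu t x k.

From Stdlib Require Import Reals Lra Lia ZArith Classical_Prop.
From Coquelicot Require Import Coquelicot.
Open Scope R_scope.

(* Writing s = T - (t+1), the two Q-values in state (x,k) are
     Q(x,1) = c + E_k[V_{t+1}(Z, k+Z+K)]      (c = c_p below xi, c_u above),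
     Q(x,0) = E_k[V_{t+1}(x+Z, k+Z+K)]        (only for x < xi).
   The replacement cost Q(x,1) does not depend on x below xi, while Q(x,0)
   is nondecreasing in x as soon as the value function is.  Hence the set of
   wear levels x < xi where replacing is optimal is upward closed, and a
   threshold exists; it is positive because Q(0,0) < c_p + Q(0,0) = Q(0,1). *)

Lemma series_bounded_partial_sums (a : nat -> R) (C : R) :
  (forall n, 0 <= a n) -> (forall n, sum_f_R0 a n <= C) ->
  ex_series a /\ Series a <= C.
Proof.
  intros Ha HC.
  assert (Hincr : forall n, sum_n a n <= sum_n a (S n)).
  { intro n. rewrite sum_Sn. unfold plus; simpl. specialize (Ha (S n)). lra. }
  assert (Hbound : forall n, sum_n a n <= C) by (intro n; rewrite sum_n_Reals; apply HC).
  destruct (ex_finite_lim_seq_incr _ _ Hincr Hbound) as [l Hl].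
  assert (Hs : is_series a l) by exact Hl.
  split; [exists l; exact Hs |].
  rewrite (is_series_unique _ _ Hs).
  exact (is_lim_seq_le _ _ _ _ Hbound Hl (is_lim_seq_const C)).
Qed.

Lemma weighted_series_mono (w f g : nat -> R) (C M : R) :
  (forall n, 0 <= w n) -> ex_series w -> Series w <= C -> 0 <= M ->
  (forall n, 0 <= f n <= g n /\ g n <= M) ->
  0 <= Series (fun n => w n * f n) <= Series (fun n => w n * g n) /\
  Series (fun n => w n * g n) <= M * C.
Proof.
  intros Hw Hsum HC HM Hfg.
  assert (Hterms : forall n, 0 <= w n * f n <= w n * g n /\ w n * g n <= M * w n).
  { intro n. specialize (Hw n). specialize (Hfg n). repeat split; nra. }
  assert (HMw : ex_series (fun n => M * w n)) by exact (ex_series_scal_l M w Hsum).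
  assert (Hdom : forall a : nat -> R, (forall n, 0 <= a n <= M * w n) -> ex_series a).
  { intros a Ha. apply (ex_series_le a (fun n => M * w n)); auto.
    intro n. specialize (Ha n). change (norm (a n)) with (Rabs (a n)).
    rewrite Rabs_pos_eq; lra. }
  assert (Hf : ex_series (fun n => w n * f n)) by (apply Hdom; intro n; specialize (Hterms n); lra).
  assert (Hg : ex_series (fun n => w n * g n)) by (apply Hdom; intro n; specialize (Hterms n); lra).
  split; [split |].
  - assert (Hzero : Series (fun n => 0 * (w n * f n)) = 0) by (rewrite Series_scal_l; ring).
    rewrite <- Hzero. apply Series_le; auto. intro n; specialize (Hterms n); lra.
  - apply Series_le; auto. intro n; specialize (Hterms n); lra.
  - apply Rle_trans with (Series (fun n => M * w n)).
    + apply Series_le; auto. intro n; specialize (Hterms n); lra.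
    + rewrite Series_scal_l. apply Rmult_le_compat_l; lra.
Qed.

Lemma rising_nonneg (r : R) (n : nat) : 0 <= r -> 0 <= rising r n.
Proof.
  intro Hr. induction n; simpl; [lra |].
  pose proof (pos_INR n). apply Rmult_le_pos; lra.
Qed.

Lemma rising_le (r r' : R) (n : nat) : 0 <= r -> r <= r' -> rising r n <= rising r' n.
Proof.
  intros Hr Hrr'. induction n; simpl; [lra |].
  pose proof (pos_INR n). apply Rmult_le_compat; try lra. now apply rising_nonneg.
Qed.

Lemma rising_shift (r : R) (n : nat) : rising r (S n) = r * rising (r + 1) n.
Proof.
  induction n; [simpl; lra |].
  change (rising r (S (S n))) with (rising r (S n) * (r + INR (S n))).
  rewrite IHn, S_INR. simpl. ring.
Qed.

Lemma fact_pos (n : nat) : 0 < INR (Factorial.fact n).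
Proof. apply lt_0_INR, Factorial.lt_O_fact. Qed.

(* The generalized binomial coefficient C(n+r-1, n), i.e. the coefficient
   of q^n in (1-q)^(-r). *)
Definition nbcoef (r : R) (n : nat) : R := rising r n / INR (Factorial.fact n).

Lemma nbcoef_nonneg (r : R) (n : nat) : 0 <= r -> 0 <= nbcoef r n.
Proof.
  intro Hr. apply Rdiv_le_0_compat; [now apply rising_nonneg | apply fact_pos].
Qed.

Lemma nbcoef_pascal (r : R) (n : nat) :
  nbcoef (r + 1) (S n) = nbcoef (r + 1) n + nbcoef r (S n).
Proof.
  unfold nbcoef. rewrite (rising_shift r n).
  change (rising (r + 1) (S n)) with (rising (r + 1) n * (r + 1 + INR n)).
  change (Factorial.fact (S n)) with (S n * Factorial.fact n)%nat.
  rewrite mult_INR, S_INR. pose proof (fact_pos n). pose proof (pos_INR n).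
  field. lra.
Qed.

Lemma nbcoef_zero (n : nat) : nbcoef 0 n = if (n =? 0)%nat then 1 else 0.
Proof. unfold nbcoef. destruct n; [simpl; lra |]. rewrite rising_shift. simpl. lra. Qed.

Section GeneratingSums.
Variable q : R.
Hypothesis q_range : 0 <= q < 1.

(* Partial sums of the series (1-q)^(-r) = sum_n C(n+r-1,n) q^n. *)
Definition nbsum (r : R) (n : nat) : R := sum_f_R0 (fun j => nbcoef r j * q ^ j) n.

Lemma nbsum_pascal (r : R) (n : nat) :
  nbsum (r + 1) (S n) = q * nbsum (r + 1) n + nbsum r (S n).
Proof.
  unfold nbsum. induction n.
  - simpl. unfold nbcoef; simpl. lra.
  - rewrite (tech5 (fun j => nbcoef (r + 1) j * q ^ j) (S n)), IHn at 1.
    rewrite (tech5 (fun j => nbcoef (r + 1) j * q ^ j) n).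
    rewrite (tech5 (fun j => nbcoef r j * q ^ j) (S n)), nbcoef_pascal.
    simpl. ring.
Qed.

Lemma nbsum_incr (r : R) (n : nat) : 0 <= r -> nbsum r n <= nbsum r (S n).
Proof.
  intro Hr. unfold nbsum. rewrite tech5.
  pose proof (nbcoef_nonneg r (S n) Hr). pose proof (pow_le q (S n) (proj1 q_range)).
  pose proof (Rmult_le_pos _ _ H H0). lra.
Qed.

Lemma nbsum_succ_le (r : R) (n : nat) : 0 <= r -> nbsum (r + 1) n * (1 - q) <= nbsum r n.
Proof.
  intro Hr. destruct n.
  - unfold nbsum; simpl. unfold nbcoef; simpl. lra.
  - pose proof (nbsum_pascal r n) as Hp.
    pose proof (nbsum_incr (r + 1) n ltac:(lra)) as Hi.
    assert (q * nbsum (r + 1) n <= q * nbsum (r + 1) (S n)) by (apply Rmult_le_compat_l; lra).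
    nra.
Qed.

Lemma nbsum_nat_le (m n : nat) : nbsum (INR m) n <= / (1 - q) ^ m.
Proof.
  assert (Hq : 0 < 1 - q) by lra.
  induction m.
  - simpl. unfold nbsum. induction n; simpl; [unfold nbcoef; simpl; lra |].
    rewrite nbcoef_zero. simpl in *. lra.
  - rewrite S_INR. simpl (_ ^ S m). rewrite Rinv_mult.
    pose proof (nbsum_succ_le (INR m) n (pos_INR m)) as Hs.
    apply Rmult_le_reg_r with (1 - q); [lra |].
    replace (/ (1 - q) * / (1 - q) ^ m * (1 - q)) with (/ (1 - q) ^ m) by (field; split;
      [apply pow_nonzero |]; lra).
    lra.
Qed.

End GeneratingSums.

(* The order r of NB(r,p) is compared with an integer just above it. *)
Lemma nat_above (r : R) : 0 <= r -> exists m : nat, r <= INR m <= r + 1.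
Proof.
  intro Hr. destruct (archimed r) as [H1 H2].
  assert (Hz : (0 <= up r)%Z) by (apply le_IZR; lra).
  exists (Z.to_nat (up r)). rewrite INR_IZR_INZ, Z2Nat.id by exact Hz. lra.
Qed.

Lemma Rpower_ratio_le (p r : R) (m : nat) :
  0 < p < 1 -> r <= INR m <= r + 1 -> Rpower p r * / p ^ m <= / p.
Proof.
  intros Hp Hm.
  rewrite <- (Rpower_pow m p) by lra. unfold Rpower.
  rewrite <- exp_Ropp, <- exp_plus.
  replace (/ p) with (exp (- ln p)) by (rewrite exp_Ropp, exp_ln; lra).
  assert (ln p < 0) by (rewrite <- ln_1; apply ln_increasing; lra).
  assert (Hle : r * ln p + - (INR m * ln p) <= - ln p) by nra.
  destruct Hle as [Hlt | Heq]; [left; now apply exp_increasing | rewrite Heq; lra].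
Qed.

Lemma nb_pmf_nonneg (r p : R) (n : nat) : 0 <= r -> 0 < p < 1 -> 0 <= nb_pmf r p n.
Proof.
  intros Hr Hp. unfold nb_pmf. apply Rmult_le_pos; [apply Rmult_le_pos |].
  - exact (nbcoef_nonneg r n Hr).
  - left. apply exp_pos.
  - apply pow_le. lra.
Qed.

(* Every partial sum of NB(r,p) is at most 1/p (its total mass is in fact 1). *)
Lemma nb_pmf_partial_le (r p : R) (n : nat) :
  0 <= r -> 0 < p < 1 -> sum_f_R0 (nb_pmf r p) n <= / p.
Proof.
  intros Hr Hp. destruct (nat_above r Hr) as [m Hm].
  assert (Hfac : sum_f_R0 (nb_pmf r p) n = Rpower p r * nbsum (1 - p) r n).
  { unfold nbsum. rewrite scal_sum.
    apply sum_eq. intros. unfold nb_pmf, nbcoef. ring. }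
  assert (Hord : nbsum (1 - p) r n <= nbsum (1 - p) (INR m) n).
  { apply sum_Rle. intros. apply Rmult_le_compat_r; [apply pow_le; lra |].
    apply Rmult_le_compat_r; [left; apply Rinv_0_lt_compat, fact_pos |].
    apply rising_le; lra. }
  pose proof (nbsum_nat_le (1 - p) ltac:(lra) m n) as Hint.
  replace (1 - (1 - p)) with p in Hint by ring.
  assert (Hpow : 0 < Rpower p r) by apply exp_pos.
  pose proof (Rpower_ratio_le p r m Hp Hm).
  rewrite Hfac. apply Rle_trans with (Rpower p r * / p ^ m); [| assumption].
  apply Rmult_le_compat_l; lra.
Qed.

Lemma nb_pmf_summable (r p : R) :
  0 <= r -> 0 < p < 1 -> ex_series (nb_pmf r p) /\ Series (nb_pmf r p) <= / p.
Proof.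
  intros Hr Hp. apply series_bounded_partial_sums.
  - intro n. now apply nb_pmf_nonneg.
  - intro n. now apply nb_pmf_partial_le.
Qed.

Lemma expect2_ext (N : nat) (alpha0 p : R) (k : nat) (f g : nat -> nat -> R) :
  (forall z m, f z m = g z m) -> expect2 N alpha0 p k f = expect2 N alpha0 p k g.
Proof.
  intro H. unfold expect2. apply Series_ext. intro z. apply Series_ext. intro m. now rewrite H.
Qed.

Lemma expect2_mono (N : nat) (alpha0 p : R) (k : nat) (f g : nat -> nat -> R) (M : R) :
  0 <= alpha0 -> 0 < p < 1 -> 0 <= M ->
  (forall z m, 0 <= f z m <= g z m /\ g z m <= M) ->
  0 <= expect2 N alpha0 p k f <= expect2 N alpha0 p k g /\
  expect2 N alpha0 p k g <= M * / p * / p.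
Proof.
  intros Ha Hp HM Hfg.
  set (r1 := alpha0 + INR k). set (r2 := INR (N - 1) * r1).
  assert (Hr1 : 0 <= r1) by (unfold r1; pose proof (pos_INR k); lra).
  assert (Hr2 : 0 <= r2) by (apply Rmult_le_pos; [apply pos_INR | exact Hr1]).
  assert (Hinv : 0 <= / p) by (left; apply Rinv_0_lt_compat; lra).
  assert (Hiter : forall h, expect2 N alpha0 p k h =
            Series (fun z => nb_pmf r1 p z * Series (fun m => nb_pmf r2 p m * h z m))).
  { intro h. unfold expect2. apply Series_ext. intro z.
    rewrite <- Series_scal_l. apply Series_ext. intro m. fold r1 r2. ring. }
  destruct (nb_pmf_summable r1 p Hr1 Hp) as [S1 B1].
  destruct (nb_pmf_summable r2 p Hr2 Hp) as [S2 B2].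
  assert (Hinner : forall z,
    0 <= Series (fun m => nb_pmf r2 p m * f z m) <= Series (fun m => nb_pmf r2 p m * g z m) /\
    Series (fun m => nb_pmf r2 p m * g z m) <= M * / p).
  { intro z. apply weighted_series_mono; auto. intro n. now apply nb_pmf_nonneg. }
  rewrite !Hiter.
  apply weighted_series_mono; auto.
  - intro n. now apply nb_pmf_nonneg.
  - now apply Rmult_le_pos.
Qed.

Lemma p_t_range (beta0 : R) (N t : nat) : 0 < beta0 -> 0 < p_t beta0 N t < 1.
Proof.
  intro Hb. unfold p_t.
  assert (0 <= INR N * INR t) by (apply Rmult_le_pos; apply pos_INR).
  split; [apply Rdiv_lt_0_compat; lra |].
  apply Rmult_lt_reg_r with (beta0 + INR N * INR t + 1); [lra |].
  unfold Rdiv. rewrite Rmult_assoc, Rinv_l by lra. lra.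
Qed.

Section ValueFunction.
Variables (N T : nat) (alpha0 beta0 : R) (xi : nat) (cp cu : R).
Hypotheses (alpha0_nonneg : 0 <= alpha0) (beta0_pos : 0 < beta0)
  (cp_nonneg : 0 <= cp) (cp_le_cu : cp <= cu).

Let V := W N T alpha0 beta0 xi cp cu.
Let p (s : nat) : R := p_t beta0 N (T - S s).

(* Expected continuation value, s steps before the horizon, when the wear
   level x is kept: E[V_s(x + Z, k + Z + K)]. *)
Definition cont (s x k : nat) : R :=
  expect2 N alpha0 (p s) k (fun z m => V s (x + z) (k + z + m)%nat).

Definition Qs (s x k a : nat) : R :=
  Cost xi cp cu x a + expect2 N alpha0 (p s) k
    (fun z m => V s (x * (1 - a) + z) (k + z + m)%nat).

Lemma V_succ (s x k : nat) :
  V (S s) x k = if (xi <=? x)%nat then Qs s x k 1 else Rmin (Qs s x k 0) (Qs s x k 1).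
Proof. reflexivity. Qed.

(* Replacement resets the wear level: its value does not depend on x below xi. *)
Lemma Qs_replace (s x k : nat) :
  Qs s x k 1 = (if (xi <=? x)%nat then cu else cp) + cont s 0 k.
Proof.
  unfold Qs, cont. f_equal.
  - unfold Cost, Ind. destruct (xi <=? x)%nat; simpl; ring.
  - apply expect2_ext. intros. now rewrite Nat.sub_diag, Nat.mul_0_r.
Qed.

Lemma Qs_keep (s x k : nat) : (x < xi)%nat -> Qs s x k 0 = cont s x k.
Proof.
  intro Hx. unfold Qs, cont, Cost, Ind.
  replace (xi <=? x)%nat with false by (symmetry; apply Nat.leb_gt; lia).
  simpl (INR 0). rewrite (expect2_ext _ _ _ _ _ (fun z m => V s (x + z) (k + z + m)%nat)).
  - ring.
  - intros. now rewrite Nat.sub_0_r, Nat.mul_1_r.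
Qed.

Lemma V_bounded (s : nat) : exists M, 0 <= M /\ forall x k, 0 <= V s x k <= M.
Proof.
  induction s as [| s [M [HM HV]]].
  - exists cu. split; [lra |]. intros. unfold V. simpl. unfold Ind. destruct (xi <=? x)%nat; lra.
  - pose proof (p_t_range beta0 N (T - S s) beta0_pos) as Hp.
    assert (Hcont : forall x k, 0 <= cont s x k <= M * / p s * / p s).
    { intros x k.
      assert (Hrange : forall z m, 0 <= V s (x + z) (k + z + m)%nat <= V s (x + z) (k + z + m)%nat
                         /\ V s (x + z) (k + z + m)%nat <= M).
      { intros z m. specialize (HV (x + z)%nat (k + z + m)%nat). lra. }
      pose proof (expect2_mono N alpha0 (p s) k _ _ M alpha0_nonneg Hp HM Hrange).
      unfold cont. lra. }
    exists (cu + M * / p s * / p s). split; [pose proof (Hcont 0%nat 0%nat); lra |].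
    intros x k. rewrite V_succ, Qs_replace. pose proof (Hcont 0%nat k).
    destruct (xi <=? x)%nat eqn:Ex; [lra |].
    rewrite Qs_keep by (now apply Nat.leb_gt). pose proof (Hcont x k).
    unfold Rmin. destruct (Rle_dec _ _); lra.
Qed.

Lemma cont_succ_mono (s x k : nat) :
  (forall y l, V s y l <= V s (S y) l) -> cont s x k <= cont s (S x) k.
Proof.
  intro Hmono. destruct (V_bounded s) as [M [HM HV]].
  pose proof (p_t_range beta0 N (T - S s) beta0_pos) as Hp.
  assert (Hrange : forall z m,
    0 <= V s (x + z) (k + z + m)%nat <= V s (S x + z) (k + z + m)%nat /\
    V s (S x + z) (k + z + m)%nat <= M).
  { intros z m. pose proof (HV (S x + z)%nat (k + z + m)%nat).
    pose proof (HV (x + z)%nat (k + z + m)%nat). pose proof (Hmono (x + z)%nat (k + z + m)%nat).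
    simpl in *. lra. }
  pose proof (expect2_mono N alpha0 (p s) k _ _ M alpha0_nonneg Hp HM Hrange).
  unfold cont. lra.
Qed.

Lemma V_mono (s x k : nat) : V s x k <= V s (S x) k.
Proof.
  revert x k. induction s as [| s IH]; intros x k.
  - unfold V. simpl. unfold Ind.
    destruct (xi <=? x)%nat eqn:E1, (xi <=? S x)%nat eqn:E2; try lra.
    apply Nat.leb_le in E1. apply Nat.leb_gt in E2. lia.
  - pose proof (cont_succ_mono s x k IH) as Hcont.
    rewrite !V_succ, !Qs_replace.
    destruct (xi <=? x)%nat eqn:E1, (xi <=? S x)%nat eqn:E2.
    + lra.
    + apply Nat.leb_le in E1. apply Nat.leb_gt in E2. lia.
    + rewrite Qs_keep by (now apply Nat.leb_gt). unfold Rmin. destruct (Rle_dec _ _); lra.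
    + rewrite !Qs_keep by (now apply Nat.leb_gt).
      unfold Rmin. destruct (Rle_dec _ _), (Rle_dec _ _); lra.
Qed.

Lemma cont_mono (s k x y : nat) : (x <= y)%nat -> cont s x k <= cont s y k.
Proof.
  intro Hxy. induction Hxy as [| y _ IH]; [lra |].
  pose proof (cont_succ_mono s y k (V_mono s)). lra.
Qed.

Lemma optimal_replace_iff (t x k : nat) : (t < T)%nat ->
  optimal N T alpha0 beta0 xi cp cu t x k 1%nat <->
  ((xi <= x)%nat \/ cp + cont (T - S t) 0 k <= cont (T - S t) x k).
Proof.
  intro Ht. set (s := (T - S t)%nat).
  assert (HQ : Qval N T alpha0 beta0 xi cp cu t x k 1 = Qs s x k 1).
  { unfold Qs, Qval, p, s. now replace (T - S (T - S t))%nat with t by lia. }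
  assert (HV : Vt N T alpha0 beta0 xi cp cu t x k = V (S s) x k).
  { unfold Vt, V, s. now replace (T - t)%nat with (S (T - S t)) by lia. }
  unfold optimal, admissible. rewrite HQ, HV, V_succ, Qs_replace.
  destruct (xi <=? x)%nat eqn:E.
  - apply Nat.leb_le in E. tauto.
  - apply Nat.leb_gt in E. rewrite Qs_keep by exact E.
    unfold Rmin. destruct (Rle_dec _ _) as [Hle | Hgt].
    + split; [intros [_ Heq]; right; lra |].
      intros [Hxi | Hcost]; [lia | split; [now right | lra]].
    + split; [intros _; right; lra | intros _; split; [now right | reflexivity]].
Qed.

End ValueFunction.

Lemma threshold_exists (P : nat -> Prop) (n : nat) :
  (forall x y, (x <= y)%nat -> (y < n)%nat -> P x -> P y) ->
  exists d, (d <= n)%nat /\ forall x, (x < n)%nat -> (P x <-> (d <= x)%nat).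
Proof.
  induction n as [| n IH]; intro Hup.
  - exists 0%nat. split; [lia | intros; lia].
  - destruct IH as [d [Hd Hx]]; [intros x y Hxy Hy; apply Hup; lia |].
    destruct (Nat.eq_dec d n) as [-> | Hne].
    + destruct (classic (P n)) as [Pn | nPn].
      * exists n. split; [lia |]. intros x Hxn.
        destruct (Nat.eq_dec x n) as [-> | ]; [tauto |]. rewrite Hx by lia. lia.
      * exists (S n). split; [lia |]. intros x Hxn.
        destruct (Nat.eq_dec x n) as [-> | ]; [split; [tauto | lia] |]. rewrite Hx by lia. lia.
    + exists d. split; [lia |]. intros x Hxn. destruct (Nat.eq_dec x n) as [-> | ].
      * split; intro; [lia |]. apply (Hup d n); [lia | lia | apply Hx; lia].
      * apply Hx; lia.
Qed.

Theorem proposition2 (N T : nat) (alpha0 beta0 : R)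
    (xi : nat -> nat) (cp cu : nat -> R) :
  (1 <= N)%nat -> (1 <= T)%nat -> 0 < alpha0 -> 0 < beta0 ->
  (forall i, (1 <= i <= N)%nat -> (1 <= xi i)%nat /\ 0 < cp i < cu i) ->
  forall (t k i : nat), (t < T)%nat -> (1 <= i <= N)%nat ->
  exists delta : nat, (0 < delta <= xi i)%nat /\
    forall x : nat,
      optimal N T alpha0 beta0 (xi i) (cp i) (cu i) t x k 1%nat <-> (delta <= x)%nat.
Proof.
  intros _ _ Ha Hb Hi t k i Ht Hii.
  destruct (Hi i Hii) as [Hxi [Hcp Hcc]].
  assert (Ha0 : 0 <= alpha0) by lra.
  assert (Hcp0 : 0 <= cp i) by lra.
  assert (Hcpu : cp i <= cu i) by lra.
  set (P := fun x => cp i + cont N T alpha0 beta0 (xi i) (cp i) (cu i) (T - S t) 0%nat k <=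
                     cont N T alpha0 beta0 (xi i) (cp i) (cu i) (T - S t) x k).
  destruct (threshold_exists P (xi i)) as [d [Hd HP]].
  { intros x y Hxy _ HPx. unfold P in *.
    pose proof (cont_mono N T alpha0 beta0 (xi i) (cp i) (cu i) Ha0 Hb Hcp0 Hcpu
                  (T - S t) k x y Hxy).
    lra. }
  (* At wear level 0, keeping is strictly cheaper than replacing (c_p > 0). *)
  assert (not_P0 : ~ P 0%nat) by (unfold P; lra).
  exists d. split.
  - split; [| exact Hd]. destruct d; [| lia]. exfalso. apply not_P0, HP; lia.
  - intro x. rewrite optimal_replace_iff by exact Ht.
    destruct (Nat.lt_ge_cases x (xi i)) as [Hlt | Hge].
    + rewrite <- (HP x Hlt). split; [intros [Hge | HPx]; [lia | exact HPx] | now right].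
    + split; [lia | now left].
Qed.
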